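(* For all integers $m\ge1$, $r\ge0$ and $n\ge1$, $$\mathcal D_{m,r}(n,x)=(-1)^n\det M_n,$$ where $M_n$ is the $(n+1)\times(n+1)$ matrix with rows and columns indexed by $0,\dots,n$, whose row $0$ is $(1,x,x^2,\dots,x^n)$ and whose row $i$ for $1\le i\le n$ is $\big(w_{m,r}(0,i-1),w_{m,r}(1,i-1),\dots,w_{m,r}(n,i-1)\big)$; explicitly $$M_n=\begin{pmatrix}1&x&\cdots&x^{n-1}&x^n\\ 1&w_{m,r}(1,0)&\cdots&w_{m,r}(n-1,0)&w_{m,r}(n,0)\\ 0&1&\cdots&w_{m,r}(n-1,1)&w_{m,r}(n,1)\\ \vdots&&\ddots&&\vdots\\ 0&0&\cdots&1&w_{m,r}(n,n-1)\end{pmatrix}.$$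
   Context: For integers $m\ge1$, $n,k,r\ge0$: the $r$-Whitney numbers of the first kind $w_{m,r}(n,k)$ are defined by $\sum_{n\ge k}w_{m,r}(n,k)\frac{z^n}{n!}=(1+mz)^{-r/m}\frac{\ln^k(1+mz)}{m^kk!}$ (so $w_{m,r}(n,n)=1$ and $w_{m,r}(n,k)=0$ for $k>n$); the $r$-Whitney numbers of the second kind $W_{m,r}(n,k)$ by $\sum_{n\ge k}W_{m,r}(n,k)\frac{z^n}{n!}=\frac{e^{rz}}{k!}\left(\frac{e^{mz}-1}{m}\right)^k$; and the $r$-Dowling polynomial is $\mathcal D_{m,r}(n,u):=\sum_{k=0}^nW_{m,r}(n,k)u^k$. *)

From HB Require Import structures.
From mathcomp Require Import all_boot all_order all_algebra.
Set Implicit Arguments. Unset Strict Implicit. Unset Printing Implicit Defensive.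
Import Order.TTheory GRing.Theory Num.Theory.
Local Open Scope ring_scope.

(* Exponential generating functions are handled through truncated power
   series, represented as polynomials over rat: the coefficient of z^n of a
   product of power series only depends on the terms of degree <= n. *)

Definition gbin (a : rat) (j : nat) : rat :=
  (\prod_(i < j) (a - i%:R)) / (j`!)%:R.

Definition pow1p_ser (m : nat) (a : rat) (N : nat) : {poly rat} :=
  \sum_(j < N.+1) (gbin a j * (m%:R) ^+ j) *: 'X^j.

Definition ln1p_ser (m : nat) (N : nat) : {poly rat} :=
  \sum_(1 <= j < N.+1) ((-1) ^+ j.+1 * (m%:R) ^+ j / j%:R) *: 'X^j.

Definition exp_ser (c : rat) (N : nat) : {poly rat} :=
  \sum_(j < N.+1) (c ^+ j / (j`!)%:R) *: 'X^j.

(* r-Whitney numbers of the first kind: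
   sum_n w(n,k) z^n/n! = (1+mz)^(-r/m) ln^k(1+mz) / (m^k k!) *)
Definition whit1 (m r n k : nat) : rat :=
  (n`!)%:R * ((pow1p_ser m (- (r%:R / m%:R)) n * (ln1p_ser m n) ^+ k)`_n
              / ((m%:R) ^+ k * (k`!)%:R)).

(* r-Whitney numbers of the second kind:
   sum_n W(n,k) z^n/n! = e^(rz)/k! ((e^(mz)-1)/m)^k *)
Definition whit2 (m r n k : nat) : rat :=
  (n`!)%:R * ((exp_ser r%:R n * (exp_ser m%:R n - 1) ^+ k)`_n
              / ((m%:R) ^+ k * (k`!)%:R)).

Definition dowling (m r n : nat) : {poly rat} :=
  \sum_(k < n.+1) (whit2 m r n k) *: 'X^k.

Definition Mmat (m r n : nat) : 'M[{poly rat}]_(n.+1) :=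
  \matrix_(i < n.+1, j < n.+1)
    (if i == 0 :> nat then 'X^j else (whit1 m r j i.-1)%:P).

From HB Require Import structures.
From mathcomp Require Import all_boot all_order all_algebra.
From mathcomp Require Import ring.
Import GRing.Theory Num.Theory.
Local Open Scope ring_scope.

(* Differentiating the exponential generating functions of the columns of
   w and W yields the triangular recurrences of both kinds of r-Whitney
   numbers, and these recurrences make the lower triangular matrices
   (W(i,j)) and (w(i,j)) mutually inverse.  Hence right multiplication by the
   unipotent matrix (W(l,j))_(j,l) leaves det M_n unchanged, turns rows 1..n of
   M_n into the unit rows e_0, ..., e_(n-1) and row 0 into
   (D(0,x), ..., D(n,x)); expanding along the last column gives
   det M_n = (-1)^n D(n,x). *)

Section AgreeUpto.
Variable R : comNzRingType.
Implicit Types p q : {poly R}.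

Definition agree_upto N p q := forall i, (i <= N)%N -> p`_i = q`_i.

Lemma agree_upto_refl N p : agree_upto N p p.
Proof. by []. Qed.

Lemma eq_agree_upto N p q : p = q -> agree_upto N p q.
Proof. by move->. Qed.

Lemma agree_upto_trans N p q s :
  agree_upto N p q -> agree_upto N q s -> agree_upto N p s.
Proof. by move=> pq qs i leiN; rewrite pq ?qs. Qed.

Lemma agree_uptoD N p p' q q' :
  agree_upto N p p' -> agree_upto N q q' -> agree_upto N (p + q) (p' + q').
Proof. by move=> pp' qq' i leiN; rewrite !coefD pp' ?qq'. Qed.

Lemma agree_uptoZ N c p q : agree_upto N p q -> agree_upto N (c *: p) (c *: q).
Proof. by move=> pq i leiN; rewrite !coefZ pq. Qed.

Lemma agree_uptoM N p p' q q' :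
  agree_upto N p p' -> agree_upto N q q' -> agree_upto N (p * q) (p' * q').
Proof.
move=> pp' qq' i leiN; rewrite !coefM; apply: eq_bigr => [[j /=]]; rewrite ltnS => leji.
by rewrite pp' ?qq' // (leq_trans _ leiN) ?leq_subr.
Qed.

Lemma agree_uptoX N p q k : agree_upto N p q -> agree_upto N (p ^+ k) (q ^+ k).
Proof.
by move=> pq; elim: k => [|k IHk] //; rewrite !exprS; apply: agree_uptoM.
Qed.

Lemma fact_coef_deriv p n : n.+1`!%:R * p`_n.+1 = n`!%:R * p^`()`_n.
Proof. by rewrite coef_deriv factS natrM -mulrA mulr_natl mulrnAr. Qed.

Lemma coef_mul_deriv c p n :
  ((1 + c *: 'X) * p^`())`_n = p`_n.+1 *+ n.+1 + c * (p`_n *+ n).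
Proof.
rewrite mulrDl mul1r coefD -scalerAl coefZ coefXM !coef_deriv.
by case: n => [|n]; rewrite ?mulr0n ?mulr0.
Qed.

End AgreeUpto.

Arguments agree_upto {R} N p q.

Section DividedPowers.
Variable F : numFieldType.
Implicit Types p q : {poly F}.

Definition dpow k p := (k`!%:R)^-1 *: p ^+ k.

Lemma dpow0 p : dpow 0 p = 1.
Proof. by rewrite /dpow expr0 fact0 invr1 scale1r. Qed.

Lemma dpow_mulS k p : p * dpow k p = dpow k.+1 p *+ k.+1.
Proof.
rewrite /dpow -scalerAr -exprS -scaler_nat scalerA factS natrM invfM.
by rewrite mulrA mulfV ?pnatr_eq0 ?mul1r.
Qed.

Lemma deriv_dpowS k p : (dpow k.+1 p)^`() = p^`() * dpow k p.
Proof.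
have invfactS : (k.+1`!%:R : F)^-1 *+ k.+1 = (k`!%:R)^-1.
  by rewrite factS natrM invfM -[_ *+ k.+1]mulr_natr mulrAC mulVf ?pnatr_eq0 ?mul1r.
by rewrite derivZ deriv_exp -mulrnAr scalerAr -scalerMnr scalerMnl invfactS.
Qed.

Lemma agree_upto_dpow N k p q : agree_upto N p q -> agree_upto N (dpow k p) (dpow k q).
Proof. by move=> pq; apply/agree_uptoZ/agree_uptoX. Qed.

End DividedPowers.

Arguments dpow {F} k p.

Lemma det_shifted_unit_rows (R : comNzRingType) n (A : 'M[R]_n.+1) :
  (forall (i : 'I_n) (j : 'I_n.+1), A (lift ord0 i) j = (j == i :> nat)%:R) ->
  \det A = (-1) ^+ n * A ord0 ord_max.
Proof.
move=> A_lift; rewrite (expand_det_col _ ord_max) big_ord_recl.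
rewrite big1 ?addr0 /cofactor => [|i _].
  have -> : row' ord0 (col' ord_max A) = 1%:M.
    by apply/matrixP => i j; rewrite !mxE A_lift lift_max eq_sym.
  by rewrite det1 mulr1 add0n mulrC.
by rewrite A_lift /= eqn_leq leqNgt ltn_ord mul0r.
Qed.

Lemma coef_exp_ser c N i :
  (exp_ser c N)`_i = if (i <= N)%N then c ^+ i / i`!%:R else 0.
Proof. by rewrite /exp_ser -(poly_def _ (fun j => c ^+ j / j`!%:R)) coef_poly ltnS. Qed.

Lemma coef_pow1p_ser m a N i :
  (pow1p_ser m a N)`_i = if (i <= N)%N then gbin a i * m%:R ^+ i else 0.
Proof. by rewrite /pow1p_ser -(poly_def _ (fun j => gbin a j * m%:R ^+ j)) coef_poly ltnS. Qed.

Lemma coef_ln1p_ser m N i :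
  (ln1p_ser m N)`_i = if (i <= N)%N then (-1) ^+ i.+1 * m%:R ^+ i / i%:R else 0.
Proof.
pose c j : rat := (-1) ^+ j.+1 * m%:R ^+ j / j%:R.
have -> : ln1p_ser m N = \sum_(j < N.+1) c j *: 'X^j.
  rewrite /ln1p_ser -(big_mkord xpredT (fun j => c j *: 'X^j)) big_ltn //.
  by rewrite /c invr0 mulr0 scale0r add0r.
by rewrite -(poly_def _ c) coef_poly ltnS.
Qed.

Lemma agree_upto_exp_ser c n N : (n <= N)%N -> agree_upto n (exp_ser c n) (exp_ser c N).
Proof. by move=> lenN i lein; rewrite !coef_exp_ser lein (leq_trans lein). Qed.

Lemma agree_upto_pow1p_ser m a n N :
  (n <= N)%N -> agree_upto n (pow1p_ser m a n) (pow1p_ser m a N).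
Proof. by move=> lenN i lein; rewrite !coef_pow1p_ser lein (leq_trans lein). Qed.

Lemma agree_upto_ln1p_ser m n N : (n <= N)%N -> agree_upto n (ln1p_ser m n) (ln1p_ser m N).
Proof. by move=> lenN i lein; rewrite !coef_ln1p_ser lein (leq_trans lein). Qed.

Lemma gbinS a j : gbin a j.+1 * j.+1%:R = (a - j%:R) * gbin a j.
Proof.
rewrite /gbin big_ord_recr /= factS natrM.
by field; rewrite nat1r !pnatr_eq0 -lt0n fact_gt0.
Qed.

Lemma exp_ser_deriv c N : agree_upto N (exp_ser c N.+1)^`() (c *: exp_ser c N.+1).
Proof.
move=> i leiN; rewrite coef_deriv coefZ !coef_exp_ser ltnS leiN (leq_trans leiN) //.
rewrite factS natrM exprS.
by field; rewrite nat1r !pnatr_eq0 -lt0n fact_gt0.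
Qed.

Lemma pow1p_ser_deriv m a N :
  agree_upto N ((1 + m%:R *: 'X) * (pow1p_ser m a N.+1)^`())
    ((a * m%:R) *: pow1p_ser m a N.+1).
Proof.
move=> i leiN; rewrite coef_mul_deriv coefZ !coef_pow1p_ser ltnS leiN (leq_trans leiN) //.
by rewrite -[_ *+ i.+1]mulr_natr -[_ *+ i]mulr_natr mulrAC gbinS exprS; ring.
Qed.

Lemma ln1p_ser_deriv m N :
  agree_upto N ((1 + m%:R *: 'X) * (ln1p_ser m N.+1)^`()) (m%:R)%:P.
Proof.
move=> i leiN; rewrite coef_mul_deriv coefC !coef_ln1p_ser ltnS leiN (leq_trans leiN) //.
case: i leiN => [|i] _ /=.
  by rewrite mulr0n mulr0 addr0 mulr1n expr1 divr1 expr2 mulrN1 opprK mul1r.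
rewrite -[_ *+ i.+2]mulr_natr -[_ *+ i.+1]mulr_natr !exprS.
by field; rewrite nat1r -(natrD _ 2 i) !pnatr_eq0.
Qed.

Lemma exp_ser0 c : exp_ser c 0 = 1.
Proof. by rewrite /exp_ser big_ord1 /= expr0 fact0 divr1 scale1r expr0. Qed.

Lemma pow1p_ser0 m a : pow1p_ser m a 0 = 1.
Proof. by rewrite /pow1p_ser big_ord1 /= /gbin big_ord0 fact0 !divr1 expr0 scale1r. Qed.

Lemma ln1p_ser0 m : ln1p_ser m 0 = 0.
Proof. by rewrite /ln1p_ser big_geq. Qed.

Lemma whit2_0n m r k : whit2 m r 0 k = (k == 0)%:R.
Proof.
rewrite /whit2 !exp_ser0 subrr mul1r fact0 mul1r.
by case: k => [|k]; rewrite ?expr0 ?coef1 ?fact0 ?divr1 // exprS mul0r coef0 mul0r.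
Qed.

Lemma whit1_0n m r k : whit1 m r 0 k = (k == 0)%:R.
Proof.
rewrite /whit1 pow1p_ser0 ln1p_ser0 mul1r fact0 mul1r.
by case: k => [|k]; rewrite ?expr0 ?coef1 ?fact0 ?divr1 // exprS mul0r coef0 mul0r.
Qed.

Section Whitney.
Variables m r : nat.
Hypothesis m_gt0 : (0 < m)%N.

Let mR_neq0 : m%:R != 0 :> rat.
Proof. by rewrite pnatr_eq0 -lt0n. Qed.

Definition egf2 N k : {poly rat} :=
  exp_ser r%:R N * dpow k ((m%:R)^-1 *: (exp_ser m%:R N - 1)).

Lemma agree_upto_egf2 {n N : nat} k : (n <= N)%N -> agree_upto n (egf2 n k) (egf2 N k).
Proof.
move=> lenN; apply: agree_uptoM; first exact: agree_upto_exp_ser.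
apply/agree_upto_dpow/agree_uptoZ/agree_uptoD; last exact: agree_upto_refl.
exact: agree_upto_exp_ser.
Qed.

Lemma whit2_egf2 {n N : nat} k : (n <= N)%N -> whit2 m r n k = n`!%:R * (egf2 N k)`_n.
Proof.
move=> lenN; rewrite -(agree_upto_egf2 k lenN _ (leqnn n)) /whit2 /egf2 /dpow.
rewrite exprZn scalerA -scalerAr coefZ invfM exprVn.
by congr (_ * _); rewrite mulrC; congr (_ * _); exact: mulrC.
Qed.

Lemma egf2_derivS N k :
  agree_upto N (egf2 N.+1 k.+1)^`()
    ((r%:R + m%:R * k.+1%:R) *: egf2 N.+1 k.+1 + egf2 N.+1 k).
Proof.
rewrite /egf2 derivM deriv_dpowS derivZ derivB derivC subr0.
set e := exp_ser r%:R N.+1; set E := exp_ser m%:R N.+1; set u := _ *: (E - 1).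
apply: (@agree_upto_trans _ _ _
  (r%:R *: e * dpow k.+1 u + e * ((m%:R)^-1 *: (m%:R *: E) * dpow k u))).
  apply: agree_uptoD; apply: agree_uptoM; try exact: agree_upto_refl.
    exact: exp_ser_deriv.
  by apply: agree_uptoM; [apply/agree_uptoZ/exp_ser_deriv | exact: agree_upto_refl].
have -> : (m%:R)^-1 *: (m%:R *: E) = m%:R *: u + 1.
  by rewrite /u !scalerA mulVf // mulfV // !scale1r subrK.
clearbody u; rewrite mulrDl mul1r -!scalerAl dpow_mulS -!mul_polyC.
by apply: eq_agree_upto; rewrite rmorphD rmorphM /= !rmorph_nat; ring.
Qed.

Lemma egf2_deriv0 N : agree_upto N (egf2 N.+1 0)^`() (r%:R *: egf2 N.+1 0).
Proof. rewrite /egf2 dpow0 !mulr1; exact: exp_ser_deriv. Qed.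

Lemma whit2S_egf2_deriv n k : whit2 m r n.+1 k = n`!%:R * ((egf2 n.+1 k)^`())`_n.
Proof. by rewrite (whit2_egf2 k (leqnn n.+1)) fact_coef_deriv. Qed.

Lemma whit2SS n k :
  whit2 m r n.+1 k.+1 = (r%:R + m%:R * k.+1%:R) * whit2 m r n k.+1 + whit2 m r n k.
Proof.
rewrite whit2S_egf2_deriv (egf2_derivS n k n (leqnn n)) coefD coefZ mulrDr mulrCA.
by rewrite -!(whit2_egf2 _ (leqnSn n)).
Qed.

Lemma whit2S0 n : whit2 m r n.+1 0 = r%:R * whit2 m r n 0.
Proof.
rewrite whit2S_egf2_deriv (egf2_deriv0 n n (leqnn n)) coefZ mulrCA.
by rewrite -(whit2_egf2 _ (leqnSn n)).
Qed.

Definition egf1 N k : {poly rat} :=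
  pow1p_ser m (- (r%:R / m%:R)) N * dpow k ((m%:R)^-1 *: ln1p_ser m N).

Lemma agree_upto_egf1 {n N : nat} k : (n <= N)%N -> agree_upto n (egf1 n k) (egf1 N k).
Proof.
move=> lenN; apply: agree_uptoM; first exact: agree_upto_pow1p_ser.
exact/agree_upto_dpow/agree_uptoZ/agree_upto_ln1p_ser.
Qed.

Lemma whit1_egf1 {n N : nat} k : (n <= N)%N -> whit1 m r n k = n`!%:R * (egf1 N k)`_n.
Proof.
move=> lenN; rewrite -(agree_upto_egf1 k lenN _ (leqnn n)) /whit1 /egf1 /dpow.
rewrite exprZn scalerA -scalerAr coefZ invfM exprVn.
by congr (_ * _); rewrite mulrC; congr (_ * _); exact: mulrC.
Qed.

Lemma egf1_derivS N k :
  agree_upto N ((1 + m%:R *: 'X) * (egf1 N.+1 k.+1)^`())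
    (egf1 N.+1 k - r%:R *: egf1 N.+1 k.+1).
Proof.
rewrite /egf1 derivM deriv_dpowS derivZ.
set a := - (r%:R / m%:R); set P := pow1p_ser m a N.+1; set L := ln1p_ser m N.+1.
set lin := 1 + m%:R *: 'X; set u := _ *: L; clearbody u.
apply: (@agree_upto_trans _ _ _
  (lin * P^`() * dpow k.+1 u + P * ((m%:R)^-1 *: (lin * L^`()) * dpow k u))).
  by apply: eq_agree_upto; rewrite -!mul_polyC; ring.
apply: (@agree_upto_trans _ _ _
  ((a * m%:R) *: P * dpow k.+1 u + P * ((m%:R)^-1 *: (m%:R)%:P * dpow k u))).
  apply: agree_uptoD; apply: agree_uptoM; try exact: agree_upto_refl.
    exact: pow1p_ser_deriv.
  by apply: agree_uptoM; [apply/agree_uptoZ/ln1p_ser_deriv | exact: agree_upto_refl].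
rewrite -[(m%:R)^-1 *: _]mul_polyC -polyCM mulVf // mul1r /a mulNr divfK //.
by apply: eq_agree_upto; rewrite scaleNr mulNr -scalerAl addrC.
Qed.

Lemma egf1_deriv0 N :
  agree_upto N ((1 + m%:R *: 'X) * (egf1 N.+1 0)^`()) (- r%:R *: egf1 N.+1 0).
Proof.
rewrite /egf1 dpow0 !mulr1 -[X in agree_upto _ _ (X *: _)](divfK mR_neq0) -mulNr.
exact: pow1p_ser_deriv.
Qed.

Lemma whit1S_egf1_deriv n k :
  whit1 m r n.+1 k + m%:R * n%:R * whit1 m r n k
  = n`!%:R * ((1 + m%:R *: 'X) * (egf1 n.+1 k)^`())`_n.
Proof.
rewrite coef_mul_deriv -coef_deriv mulrDr -fact_coef_deriv.
rewrite -(whit1_egf1 k (leqnn n.+1)) (whit1_egf1 k (leqnSn n)).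
rewrite -[_ *+ n]mulr_natr.
by congr (_ + _); ring.
Qed.

Lemma whit1SS n k :
  whit1 m r n.+1 k.+1 = whit1 m r n k - (r%:R + m%:R * n%:R) * whit1 m r n k.+1.
Proof.
apply: (addIr (m%:R * n%:R * whit1 m r n k.+1)).
rewrite whit1S_egf1_deriv (egf1_derivS n k n (leqnn n)) coefB coefZ mulrBr mulrCA.
by rewrite -!(whit1_egf1 _ (leqnSn n)); ring.
Qed.

Lemma whit1S0 n : whit1 m r n.+1 0 = - (r%:R + m%:R * n%:R) * whit1 m r n 0.
Proof.
apply: (addIr (m%:R * n%:R * whit1 m r n 0)).
rewrite whit1S_egf1_deriv (egf1_deriv0 n n (leqnn n)) coefZ mulrCA.
by rewrite -(whit1_egf1 _ (leqnSn n)); ring.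
Qed.

Lemma whit2_small n k : (n < k)%N -> whit2 m r n k = 0.
Proof.
elim: n k => [|n IHn] [|k] // ltnk; first by rewrite whit2_0n.
by rewrite whit2SS !IHn ?mulr0 ?add0r // ltnW.
Qed.

Lemma whit2nn n : whit2 m r n n = 1.
Proof.
elim: n => [|n IHn]; first by rewrite whit2_0n.
by rewrite whit2SS IHn whit2_small // mulr0 add0r.
Qed.

(* Summation by parts: the recurrence of W in its row index is moved onto w. *)
Lemma sum_whit2S_whit1 l B k : (l < B)%N ->
  \sum_(j < B.+1) whit2 m r l.+1 j * whit1 m r j k
  = \sum_(j < B.+1) whit2 m r l j * ((r%:R + m%:R * j%:R) * whit1 m r j k + whit1 m r j.+1 k).
Proof.
move=> ltlB; rewrite big_ord_recl whit2S0.
under eq_bigr do rewrite /= whit2SS mulrDl.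
under [in RHS]eq_bigr do rewrite mulrDr.
rewrite !big_split /= big_ord_recl [in X in _ = _ + X]big_ord_recr /=.
rewrite (whit2_small l B ltlB) mul0r addr0 mulr0 addr0 addrA.
congr (_ + _ + _); first by ring.
by apply: eq_bigr => j _; rewrite /bump /= add1n; ring.
Qed.

Lemma sum_whit2_whit1 l B k : (l < B)%N ->
  \sum_(j < B) whit2 m r l j * whit1 m r j k = (l == k)%:R.
Proof.
elim: l B k => [|l IHl] [|B] k // ltlB.
  rewrite big_ord_recl big1 ?addr0 => [|j _]; last by rewrite whit2_0n mul0r.
  by rewrite whit2_0n whit1_0n mul1r eq_sym.
rewrite sum_whit2S_whit1 //; case: k => [|k].
  by rewrite big1 // => j _; rewrite whit1S0 mulNr subrr mulr0.
rewrite eqSS -(IHl B.+1 k (ltnW ltlB)).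
by apply: eq_bigr => j _; rewrite whit1SS addrC subrK.
Qed.

Definition whit2_mx n : 'M[{poly rat}]_n.+1 :=
  \matrix_(j < n.+1, l < n.+1) (whit2 m r l j)%:P.

Lemma det_whit2_mx n : \det (whit2_mx n) = 1.
Proof.
rewrite -det_tr det_trig; first by rewrite big1 // => i _; rewrite !mxE whit2nn.
by apply/is_trig_mxP => i j ltij; rewrite !mxE whit2_small.
Qed.

Lemma Mmat_whit2_mx_lift0 n (i : 'I_n) (l : 'I_n.+1) :
  (Mmat m r n *m whit2_mx n) (lift ord0 i) l = (l == i :> nat)%:R.
Proof.
rewrite !mxE; under eq_bigr do rewrite !mxE lift0 /= -polyCM mulrC.
by rewrite -rmorph_sum sum_whit2_whit1 // rmorph_nat.
Qed.

Lemma Mmat_whit2_mx_ord0_max n : (Mmat m r n *m whit2_mx n) ord0 ord_max = dowling m r n.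
Proof. by rewrite !mxE; apply: eq_bigr => k _; rewrite !mxE mulrC mul_polyC. Qed.

End Whitney.

Theorem mainTheorem20 (m r n : nat) (hm : (1 <= m)%N) (hn : (1 <= n)%N) :
  dowling m r n = (-1) ^+ n * \det (Mmat m r n).
Proof.
have det_Mmat : \det (Mmat m r n) = (-1) ^+ n * dowling m r n.
  rewrite -[LHS]mulr1 -[in LHS](det_whit2_mx m r hm n) -det_mulmx det_shifted_unit_rows.
    by rewrite Mmat_whit2_mx_ord0_max.
  exact: Mmat_whit2_mx_lift0.
by rewrite det_Mmat signrMK.
Qed.
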